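(* Let $K\subset\mathbb E$ be a regular cone and $F$ a normal barrier for $K$ with negative curvature. Then for every $x\in\operatorname{int}K$ and every $h\in K$, $$\nabla^2F(x)h\in K^*\qquad\text{and}\qquad \nabla F(x+h)-\nabla F(x)\in K^*.$$
   Context: $\mathbb E$ finite-dimensional real space, dual $\mathbb E^*$, pairing $\langle\cdot,\cdot\rangle$. $K$ regular: closed, convex, pointed, nonempty interior; $K^*=\{s\in\mathbb E^*:\langle s,x\rangle\ge0\ \forall x\in K\}$. A normal barrier for $K$ is a self-concordant barrier $F$ on $\operatorname{int}K$ with $F(\tau x)=F(x)-\nu\ln\tau$ for all $\tau>0$. $F$ has negative curvature if $D^3F(x)[h,u,u]\le0$ for all $x\in\operatorname{int}K$, $h\in K$, $u\in\mathbb E$. *)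

From Stdlib Require Fin.
From Stdlib Require Import Reals.
Open Scope R_scope.

(* E = R^n, vectors are functions Fin.t n -> R.  The dual E^* is modelled
   literally as the linear functionals E -> R, and the pairing <s,x> is s x. *)
Definition vec (n : nat) := Fin.t n -> R.

Definition vadd {n} (x y : vec n) : vec n := fun i => x i + y i.
Definition vscal {n} (a : R) (x : vec n) : vec n := fun i => a * x i.
Definition vopp {n} (x : vec n) : vec n := fun i => - x i.
Definition vzero {n} : vec n := fun _ => 0.

(* Topology of R^n (sup-norm balls; all norms are equivalent). *)
Definition near {n} (x y : vec n) (r : R) : Prop := forall i, Rabs (y i - x i) < r.

Definition int_set {n} (K : vec n -> Prop) (x : vec n) : Prop :=
  exists r, 0 < r /\ forall y, near x y r -> K y.

Definition seq_cv {n} (xs : nat -> vec n) (b : vec n) : Prop :=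
  forall i, Un_cv (fun k => xs k i) (b i).

Definition closed_set {n} (K : vec n -> Prop) : Prop :=
  forall xs b, (forall k, K (xs k)) -> seq_cv xs b -> K b.

Definition convex_set {n} (K : vec n -> Prop) : Prop :=
  forall x y l, K x -> K y -> 0 <= l <= 1 -> K (vadd (vscal l x) (vscal (1 - l) y)).

Definition is_cone {n} (K : vec n -> Prop) : Prop :=
  forall x t, K x -> 0 <= t -> K (vscal t x).

Definition pointed {n} (K : vec n -> Prop) : Prop :=
  forall x, K x -> K (vopp x) -> x = vzero.

Definition regular_cone {n} (K : vec n -> Prop) : Prop :=
  is_cone K /\ closed_set K /\ convex_set K /\ pointed K /\ exists x, int_set K x.

Definition linear_form {n} (s : vec n -> R) : Prop :=
  forall x y a b, s (vadd (vscal a x) (vscal b y)) = a * s x + b * s y.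

Definition in_dual_cone {n} (K : vec n -> Prop) (s : vec n -> R) : Prop :=
  linear_form s /\ forall x, K x -> 0 <= s x.

Definition cont_on {n} (U : vec n -> Prop) (f : vec n -> R) : Prop :=
  forall x, U x -> forall eps, 0 < eps ->
    exists del, 0 < del /\ forall y, U y -> near x y del -> Rabs (f y - f x) < eps.

(* DF x h = DF(x)[h],  D2F x h u = D^2F(x)[h,u],  D3F x h u v = D^3F(x)[h,u,v]:
   F is C^3 on the open set U with these (multilinear, continuous) derivatives. *)
Definition C3_on {n} (U : vec n -> Prop) (F : vec n -> R)
    (DF : vec n -> vec n -> R) (D2F : vec n -> vec n -> vec n -> R)
    (D3F : vec n -> vec n -> vec n -> vec n -> R) : Prop :=
  (forall x h, U x ->
     derivable_pt_lim (fun t => F (vadd x (vscal t h))) 0 (DF x h)) /\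
  (forall x h u, U x ->
     derivable_pt_lim (fun t => DF (vadd x (vscal t h)) u) 0 (D2F x h u)) /\
  (forall x h u v, U x ->
     derivable_pt_lim (fun t => D2F (vadd x (vscal t h)) u v) 0 (D3F x h u v)) /\
  cont_on U F /\
  (forall h, cont_on U (fun x => DF x h)) /\
  (forall h u, cont_on U (fun x => D2F x h u)) /\
  (forall h u v, cont_on U (fun x => D3F x h u v)) /\
  (forall x, U x ->
     linear_form (DF x) /\
     (forall u, linear_form (fun h => D2F x h u)) /\
     (forall h, linear_form (D2F x h)) /\
     (forall u v, linear_form (fun h => D3F x h u v)) /\
     (forall h v, linear_form (fun u => D3F x h u v)) /\
     (forall h u, linear_form (D3F x h u))).

Definition convex_fun_on {n} (U : vec n -> Prop) (F : vec n -> R) : Prop :=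
  forall x y l, U x -> U y -> 0 <= l <= 1 ->
    F (vadd (vscal l x) (vscal (1 - l) y)) <= l * F x + (1 - l) * F y.

Definition self_concordant_barrier {n} (K : vec n -> Prop) (F : vec n -> R)
    DF D2F D3F : Prop :=
  C3_on (int_set K) F DF D2F D3F /\
  convex_fun_on (int_set K) F /\
  (forall xs b, (forall k, int_set K (xs k)) -> seq_cv xs b -> ~ int_set K b ->
     cv_infty (fun k => F (xs k))) /\
  (forall x u, int_set K x ->
     Rabs (D3F x u u u) <= 2 * (D2F x u u * sqrt (D2F x u u))) /\
  (exists theta, forall x u, int_set K x -> (DF x u) ^ 2 <= theta * D2F x u u).

Definition normal_barrier {n} (K : vec n -> Prop) (F : vec n -> R) (nu : R)
    DF D2F D3F : Prop :=
  self_concordant_barrier K F DF D2F D3F /\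
  forall x tau, int_set K x -> 0 < tau -> F (vscal tau x) = F x - nu * ln tau.

Definition negative_curvature {n} (K : vec n -> Prop)
    (D3F : vec n -> vec n -> vec n -> vec n -> R) : Prop :=
  forall x h u, int_set K x -> K h -> D3F x h u u <= 0.

From Stdlib Require Import Reals Lra Psatz FunctionalExtensionality.
From Stdlib Require Fin.
Open Scope R_scope.

(* Let y be interior, k, u in K.  Along the ray y + t k the number D^2F[k,u]
   is nonincreasing, since by the symmetry of D^3F its derivative D^3F[k,k,u]
   equals D^3F[u,k,k] <= 0; likewise D^2F[u,u] is nonincreasing.  Were
   D^2F(y)[k,u] < 0, the slope DF(y + t k)[u] would tend to -oo linearly
   while D^2F(y + t k)[u,u] stays bounded, against the barrier inequality
   (DF[u])^2 <= theta D^2F[u,u].  So D^2F(y)[k,u] >= 0, and the statement on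
   gradients follows by the mean value theorem along x + t h.  The symmetry of
   the derivatives is not among the hypotheses: it is Schwarz's theorem for
   directional derivatives with continuous second derivative. *)

Ltac vec_ext := apply functional_extensionality; intro; unfold vadd, vscal; ring.

Lemma vec_bounded {n} (a : vec n) : exists M, 0 <= M /\ forall i, Rabs (a i) <= M.
Proof.
  induction n as [|n IH].
  - exists 0; split; [lra|]. intro i. apply (Fin.case0 (fun _ => _) i).
  - destruct (IH (fun j => a (Fin.FS j))) as [M [HM0 HM]].
    exists (Rmax M (Rabs (a Fin.F1))). split.
    + apply Rle_trans with M; [lra | apply Rmax_l].
    + intro i. apply (Fin.caseS' i).
      * apply Rmax_r.
      * intro j. apply Rle_trans with M; [apply HM | apply Rmax_l].
Qed.

Lemma near_trans {n} (x y z : vec n) r s :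
  near x y r -> near y z s -> near x z (r + s).
Proof.
  intros Hxy Hyz i. specialize (Hxy i). specialize (Hyz i).
  replace (z i - x i) with ((z i - y i) + (y i - x i)) by ring.
  eapply Rle_lt_trans; [apply Rabs_triang | lra].
Qed.

Lemma near_line {n} (d : vec n) m :
  0 < m -> exists e, 0 < e /\ forall w t, Rabs t < e -> near w (vadd w (vscal t d)) m.
Proof.
  intros Hm. destruct (vec_bounded d) as [M [HM0 HM]].
  exists (m / (M + 1)). split; [apply Rdiv_lt_0_compat; lra|].
  intros w t Ht i. unfold vadd, vscal.
  replace (w i + t * d i - w i) with (t * d i) by ring.
  rewrite Rabs_mult.
  assert (Rabs t * (M + 1) < m).
  { apply (Rmult_lt_compat_r (M + 1)) in Ht; [|lra].
    unfold Rdiv in Ht. rewrite Rmult_assoc, Rinv_l in Ht by lra. lra. }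
  pose proof (HM i). pose proof (Rabs_pos t). nra.
Qed.

Definition open_set {n} (U : vec n -> Prop) : Prop :=
  forall z, U z -> exists r, 0 < r /\ forall y, near z y r -> U y.

Lemma int_set_open {n} (K : vec n -> Prop) : open_set (int_set K).
Proof.
  intros z [r [Hr HK]]. exists (r / 2). split; [lra|].
  intros y Hy. exists (r / 2). split; [lra|].
  intros w Hw. apply HK. replace r with (r / 2 + r / 2) by field.
  exact (near_trans _ _ _ _ _ Hy Hw).
Qed.

Lemma open_set_line {n} (U : vec n -> Prop) z d :
  open_set U -> U z -> exists e, 0 < e /\ forall t, Rabs t < e -> U (vadd z (vscal t d)).
Proof.
  intros HU Hz. destruct (HU z Hz) as [r [Hr Hball]].
  destruct (near_line d r Hr) as [e [He Hnear]].
  exists e. split; [exact He|]. intros t Ht. apply Hball, Hnear, Ht.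
Qed.

Lemma derivable_pt_lim_along {n} (f : vec n -> R) (Q : R -> vec n) d s0 l :
  (forall s, Q s = vadd (Q s0) (vscal (s - s0) d)) ->
  derivable_pt_lim (fun t => f (vadd (Q s0) (vscal t d))) 0 l ->
  derivable_pt_lim (fun s => f (Q s)) s0 l.
Proof.
  intros HQ Hl.
  apply derivable_pt_lim_ext with
    (comp (fun t => f (vadd (Q s0) (vscal t d))) (fun s => s - s0)).
  { intro s. unfold comp. rewrite <- HQ. reflexivity. }
  replace l with (l * (1 - 0)) by ring.
  apply derivable_pt_lim_comp.
  - apply derivable_pt_lim_minus; [apply derivable_pt_lim_id | apply derivable_pt_lim_const].
  - rewrite Rminus_diag. exact Hl.
Qed.

Lemma directional_derivative_local_unique {n} (U : vec n -> Prop) (f1 f2 : vec n -> R)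
    z d l1 l2 :
  open_set U -> (forall w, U w -> f1 w = f2 w) -> U z ->
  derivable_pt_lim (fun t => f1 (vadd z (vscal t d))) 0 l1 ->
  derivable_pt_lim (fun t => f2 (vadd z (vscal t d))) 0 l2 -> l1 = l2.
Proof.
  intros HU Hf Hz H1 H2.
  destruct (open_set_line U z d HU Hz) as [e [He Hl]].
  apply (uniqueness_limite (fun t => f2 (vadd z (vscal t d))) 0); [|exact H2].
  apply (derivable_pt_lim_locally_ext (fun t => f1 (vadd z (vscal t d))) _ 0 (- e) e);
    [lra | | exact H1].
  intros t Ht. apply Hf, Hl. apply Rabs_def1; lra.
Qed.

Lemma le_linear_of_derive_le (g g' : R -> R) c :
  (forall s, 0 <= s -> derivable_pt_lim g s (g' s)) ->
  (forall s, 0 <= s -> g' s <= c) ->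
  forall t, 0 <= t -> g t <= g 0 + c * t.
Proof.
  intros Hg Hc t Ht. destruct (Req_dec t 0) as [->|Ht0]; [lra|].
  destruct (MVT_cor2 g g' 0 t ltac:(lra)) as [s [Es Hs]].
  { intros s Hs. apply Hg. lra. }
  assert (g' s <= c) by (apply Hc; lra). nra.
Qed.

Lemma le_of_derive_nonpos (g g' : R -> R) :
  (forall s, 0 <= s -> derivable_pt_lim g s (g' s)) ->
  (forall s, 0 <= s -> g' s <= 0) ->
  forall t, 0 <= t -> g t <= g 0.
Proof.
  intros Hg Hc t Ht. replace (g 0) with (g 0 + 0 * t) by ring.
  exact (le_linear_of_derive_le g g' 0 Hg Hc t Ht).
Qed.

Definition rect {n} (z a b : vec n) (s t : R) : vec n :=
  vadd (vadd z (vscal s a)) (vscal t b).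

Lemma rect_swap {n} (z a b : vec n) s t : rect z b a s t = rect z a b t s.
Proof. unfold rect. vec_ext. Qed.

Lemma near_rect {n} (z a b : vec n) m :
  0 < m -> exists rho, 0 < rho /\
    forall s t, Rabs s <= rho -> Rabs t <= rho -> near z (rect z a b s t) m.
Proof.
  intros Hm. destruct (near_line a (m / 2) ltac:(lra)) as [ea [Hea Ha]].
  destruct (near_line b (m / 2) ltac:(lra)) as [eb [Heb Hb]].
  exists (Rmin ea eb / 2). pose proof (Rmin_l ea eb). pose proof (Rmin_r ea eb).
  split; [pose proof (Rmin_pos ea eb Hea Heb); lra|].
  intros s t Hs Ht. replace m with (m / 2 + m / 2) by field.
  apply near_trans with (vadd z (vscal s a)); [apply Ha | apply Hb]; lra.
Qed.

Section Schwarz.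

Context {n : nat} (U : vec n -> Prop) (phi : vec n -> R) (psi : vec n -> vec n -> R)
  (chi : vec n -> vec n -> vec n -> R).

Hypothesis phi_deriv : forall z a, U z ->
  derivable_pt_lim (fun t => phi (vadd z (vscal t a))) 0 (psi z a).
Hypothesis psi_deriv : forall z a b, U z ->
  derivable_pt_lim (fun t => psi (vadd z (vscal t a)) b) 0 (chi z a b).

Lemma second_difference_mvt z a b rho :
  0 < rho -> (forall s t, 0 <= s <= rho -> 0 <= t <= rho -> U (rect z a b s t)) ->
  exists s t, 0 < s < rho /\ 0 < t < rho /\
    phi (rect z a b rho rho) - phi (rect z a b rho 0) - phi (rect z a b 0 rho)
      + phi (rect z a b 0 0) = rho * rho * chi (rect z a b s t) b a.
Proof.
  intros Hrho HU.
  destruct (MVT_cor2 (fun s => phi (rect z a b s rho) - phi (rect z a b s 0))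
              (fun s => psi (rect z a b s rho) a - psi (rect z a b s 0) a) 0 rho Hrho)
    as [s [Es Hs]].
  { intros s Hs. apply derivable_pt_lim_minus;
      (apply derivable_pt_lim_along with a;
       [intro; unfold rect; vec_ext | apply phi_deriv, HU; lra]). }
  destruct (MVT_cor2 (fun t => psi (rect z a b s t) a) (fun t => chi (rect z a b s t) b a)
              0 rho Hrho) as [t [Et Ht]].
  { intros t Ht. apply (derivable_pt_lim_along (fun w => psi w a) (rect z a b s) b);
      [intro; unfold rect; vec_ext | apply psi_deriv, HU; lra]. }
  exists s, t. split; [lra|]. split; [lra|].
  cbv beta in Es, Et. rewrite Et in Es. lra.
Qed.

Hypothesis U_open : open_set U.
Hypothesis chi_cont : forall a b, cont_on U (fun z => chi z a b).

Lemma chi_symmetric z a b : U z -> chi z a b = chi z b a.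
Proof.
  intros Hz. apply cond_eq. intros eps Heps.
  destruct (U_open z Hz) as [r [Hr Hball]].
  destruct (chi_cont b a z Hz (eps / 2) ltac:(lra)) as [d1 [Hd1 C1]].
  destruct (chi_cont a b z Hz (eps / 2) ltac:(lra)) as [d2 [Hd2 C2]].
  set (m := Rmin r (Rmin d1 d2)).
  assert (Hm : 0 < m) by (unfold m; repeat apply Rmin_pos; lra).
  assert (Hmr : m <= r) by apply Rmin_l.
  assert (Hm1 : m <= d1) by (eapply Rle_trans; [apply Rmin_r | apply Rmin_l]).
  assert (Hm2 : m <= d2) by (eapply Rle_trans; [apply Rmin_r | apply Rmin_r]).
  destruct (near_rect z a b m Hm) as [rho [Hrho Hnear]].
  assert (Hin : forall s t, 0 <= s <= rho -> 0 <= t <= rho ->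
            forall m', m <= m' -> near z (rect z a b s t) m').
  { intros s t Hs Ht m' Hm' i.
    assert (Hst := Hnear s t ltac:(apply Rabs_le; lra) ltac:(apply Rabs_le; lra) i). lra. }
  assert (HU : forall s t, 0 <= s <= rho -> 0 <= t <= rho -> U (rect z a b s t))
    by (intros; apply Hball, Hin; auto).
  destruct (second_difference_mvt z a b rho Hrho HU) as [s [t [Hs [Ht E]]]].
  destruct (second_difference_mvt z b a rho Hrho) as [t' [s' [Ht' [Hs' E']]]].
  { intros t' s' Ht' Hs'. rewrite (rect_swap z a b). apply HU; auto. }
  rewrite !(rect_swap z a b) in E'.
  assert (Eq : chi (rect z a b s t) b a = chi (rect z a b s' t') a b).
  { apply Rmult_eq_reg_l with (rho * rho); [lra | apply Rgt_not_eq, Rmult_lt_0_compat; lra]. }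
  specialize (C1 (rect z a b s t) ltac:(apply HU; lra) ltac:(apply Hin; lra)).
  specialize (C2 (rect z a b s' t') ltac:(apply HU; lra) ltac:(apply Hin; lra)).
  cbv beta in C1, C2. rewrite Eq in C1.
  apply Rabs_def2 in C1. apply Rabs_def2 in C2. apply Rabs_def1; lra.
Qed.

End Schwarz.

Lemma derive_neg_local_decrease (g : R -> R) x c :
  derivable_pt_lim g x c -> c < 0 ->
  exists del, 0 < del /\ forall h, h <> 0 -> Rabs h < del -> (g (x + h) - g x) * h < 0.
Proof.
  intros Hg Hc. destruct (Hg (- c / 2) ltac:(lra)) as [del Hdel].
  exists del. split; [apply cond_pos|]. intros h Hh0 Hh.
  destruct (Rabs_def2 _ _ (Hdel h Hh0 Hh)) as [Hq _].
  set (q := (g (x + h) - g x) / h) in Hq.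
  replace (g (x + h) - g x) with (q * h) by (unfold q; field; exact Hh0).
  assert (0 < h * h) by nra. nra.
Qed.

Lemma second_derivative_nonneg_of_midpoint_convex (f f' : R -> R) e c :
  0 < e -> (forall t, Rabs t < e -> derivable_pt_lim f t (f' t)) ->
  derivable_pt_lim f' 0 c ->
  (forall t, Rabs t < e -> 2 * f 0 <= f t + f (- t)) -> 0 <= c.
Proof.
  intros He Df Df' Hmid. destruct (Rle_or_lt 0 c) as [|Hc]; [assumption|exfalso].
  destruct (derive_neg_local_decrease f' 0 c Df' Hc) as [del [Hdel Hdec]].
  set (ep := Rmin del e / 2).
  pose proof (Rmin_l del e). pose proof (Rmin_r del e). pose proof (Rmin_pos del e Hdel He).
  assert (Hin : forall t, - ep <= t <= ep -> Rabs t < del /\ Rabs t < e)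
    by (intros t Ht; split; apply Rabs_def1; unfold ep in *; lra).
  destruct (MVT_cor2 f f' 0 ep ltac:(unfold ep; lra)) as [x1 [E1 Hx1]].
  { intros t Ht. apply Df, Hin. lra. }
  destruct (MVT_cor2 f f' (- ep) 0 ltac:(unfold ep; lra)) as [x2 [E2 Hx2]].
  { intros t Ht. apply Df, Hin. lra. }
  assert (D1 := Hdec x1 ltac:(lra) ltac:(apply Hin; lra)).
  assert (D2 := Hdec x2 ltac:(lra) ltac:(apply Hin; lra)).
  rewrite Rplus_0_l in D1, D2.
  assert (f' x1 < f' 0) by nra. assert (f' 0 < f' x2) by nra.
  assert (M := Hmid ep ltac:(apply Hin; lra)). nra.
Qed.

Lemma hessian_nonneg_of_convex {n} (U : vec n -> Prop) (F : vec n -> R)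
    (DF : vec n -> vec n -> R) (D2F : vec n -> vec n -> vec n -> R) :
  open_set U ->
  (forall x h, U x -> derivable_pt_lim (fun t => F (vadd x (vscal t h))) 0 (DF x h)) ->
  (forall x h u, U x -> derivable_pt_lim (fun t => DF (vadd x (vscal t h)) u) 0 (D2F x h u)) ->
  convex_fun_on U F ->
  forall y u, U y -> 0 <= D2F y u u.
Proof.
  intros HU D1 D2 Hconv y u Hy.
  destruct (open_set_line U y u HU Hy) as [e [He Hl]].
  apply (second_derivative_nonneg_of_midpoint_convex
           (fun t => F (vadd y (vscal t u))) (fun t => DF (vadd y (vscal t u)) u) e);
    [exact He | | apply D2, Hy | ].
  - intros t Ht. apply derivable_pt_lim_along with u; [intro; vec_ext | apply D1, Hl, Ht].
  - intros t Ht. cbv beta.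
    assert (Ht' : Rabs (- t) < e) by (rewrite Rabs_Ropp; exact Ht).
    assert (C := Hconv _ _ (1 / 2) (Hl t Ht) (Hl (- t) Ht') ltac:(lra)).
    replace (vadd (vscal (1 / 2) (vadd y (vscal t u)))
               (vscal (1 - 1 / 2) (vadd y (vscal (- t) u))))
      with (vadd y (vscal 0 u)) in C
      by (apply functional_extensionality; intro; unfold vadd, vscal; field).
    lra.
Qed.

Lemma third_derivative_swap {n} (U : vec n -> Prop) (F : vec n -> R)
    (DF : vec n -> vec n -> R) (D2F : vec n -> vec n -> vec n -> R)
    (D3F : vec n -> vec n -> vec n -> vec n -> R) :
  open_set U ->
  (forall x h, U x -> derivable_pt_lim (fun t => F (vadd x (vscal t h))) 0 (DF x h)) ->
  (forall x h u, U x -> derivable_pt_lim (fun t => DF (vadd x (vscal t h)) u) 0 (D2F x h u)) ->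
  (forall x h u v, U x ->
     derivable_pt_lim (fun t => D2F (vadd x (vscal t h)) u v) 0 (D3F x h u v)) ->
  (forall h u, cont_on U (fun x => D2F x h u)) ->
  (forall h u v, cont_on U (fun x => D3F x h u v)) ->
  forall x h u, U x -> D3F x h h u = D3F x u h h.
Proof.
  intros HU D1 D2 D3 cD2 cD3 x h u Hx.
  rewrite <- (chi_symmetric U (fun w => DF w h) (fun w a => D2F w a h)
                (fun w a b => D3F w a b h)); auto.
  apply (directional_derivative_local_unique U (fun w => D2F w h u) (fun w => D2F w u h) x h);
    auto.
  intros w Hw. apply (chi_symmetric U F DF D2F); auto.
Qed.

Lemma cone_add {n} (K : vec n -> Prop) a b :
  is_cone K -> convex_set K -> K a -> K b -> K (vadd a b).
Proof.
  intros Hc Hv Ha Hb.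
  replace (vadd a b) with (vscal 2 (vadd (vscal (1 / 2) a) (vscal (1 - 1 / 2) b)))
    by (apply functional_extensionality; intro; unfold vadd, vscal; field).
  apply Hc; [apply Hv; auto | ]; lra.
Qed.

Lemma int_set_ray {n} (K : vec n -> Prop) x h t :
  is_cone K -> convex_set K -> int_set K x -> K h -> 0 <= t ->
  int_set K (vadd x (vscal t h)).
Proof.
  intros Hc Hv [r [Hr HK]] Hh Ht. exists r. split; [exact Hr|]. intros y Hy.
  replace y with (vadd (vadd y (vscal (- t) h)) (vscal t h)) by vec_ext.
  apply cone_add; auto.
  apply HK. intro i. specialize (Hy i). unfold vadd, vscal in *.
  replace (y i + - t * h i - x i) with (y i - (x i + t * h i)) by ring. exact Hy.
Qed.

Lemma linear_form_sub {n} (s1 s2 : vec n -> R) :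
  linear_form s1 -> linear_form s2 -> linear_form (fun u => s1 u - s2 u).
Proof. intros L1 L2 x y a b. rewrite L1, L2. ring. Qed.

Section NegativeCurvature.

Context {n : nat} (K : vec n -> Prop) (DF : vec n -> vec n -> R)
  (D2F : vec n -> vec n -> vec n -> R) (D3F : vec n -> vec n -> vec n -> vec n -> R)
  (theta : R).

Hypothesis K_cone : is_cone K.
Hypothesis K_convex : convex_set K.
Hypothesis DF_deriv : forall x h u, int_set K x ->
  derivable_pt_lim (fun t => DF (vadd x (vscal t h)) u) 0 (D2F x h u).
Hypothesis D2F_deriv : forall x h u v, int_set K x ->
  derivable_pt_lim (fun t => D2F (vadd x (vscal t h)) u v) 0 (D3F x h u v).
Hypothesis D3F_swap : forall x h u, int_set K x -> D3F x h h u = D3F x u h h.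
Hypothesis D2F_diag_nonneg : forall x u, int_set K x -> 0 <= D2F x u u.
Hypothesis barrier_parameter : forall x u, int_set K x -> (DF x u) ^ 2 <= theta * D2F x u u.
Hypothesis neg_curvature : negative_curvature K D3F.

Section Ray.

Variables y k : vec n.
Hypothesis y_int : int_set K y.
Hypothesis k_in_K : K k.

Let ray t := vadd y (vscal t k).

Let ray_0 : ray 0 = y.
Proof. unfold ray. vec_ext. Qed.

Let ray_int t : 0 <= t -> int_set K (ray t).
Proof. intros Ht. apply int_set_ray; auto. Qed.

Lemma derivable_along_ray (f g : vec n -> R) :
  (forall w, int_set K w -> derivable_pt_lim (fun t => f (vadd w (vscal t k))) 0 (g w)) ->
  forall s, 0 <= s -> derivable_pt_lim (fun t => f (ray t)) s (g (ray s)).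
Proof.
  intros Hf s Hs. apply derivable_pt_lim_along with k.
  - intro t. unfold ray. vec_ext.
  - apply Hf, ray_int, Hs.
Qed.

Lemma D2F_ray_diag_le u t : 0 <= t -> D2F (ray t) u u <= D2F y u u.
Proof.
  rewrite <- ray_0.
  apply (le_of_derive_nonpos (fun t => D2F (ray t) u u) (fun t => D3F (ray t) k u u)).
  - apply (derivable_along_ray (fun w => D2F w u u) (fun w => D3F w k u u)).
    intros w Hw. apply D2F_deriv, Hw.
  - intros s Hs. apply neg_curvature; auto.
Qed.

Lemma D2F_ray_cross_le u t : K u -> 0 <= t -> D2F (ray t) k u <= D2F y k u.
Proof.
  intros Hu. rewrite <- ray_0.
  apply (le_of_derive_nonpos (fun t => D2F (ray t) k u) (fun t => D3F (ray t) k k u)).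
  - apply (derivable_along_ray (fun w => D2F w k u) (fun w => D3F w k k u)).
    intros w Hw. apply D2F_deriv, Hw.
  - intros s Hs. rewrite D3F_swap by auto. apply neg_curvature; auto.
Qed.

Lemma DF_ray_le u t : K u -> 0 <= t -> DF (ray t) u <= DF y u + D2F y k u * t.
Proof.
  intros Hu. rewrite <- ray_0.
  apply (le_linear_of_derive_le (fun t => DF (ray t) u) (fun t => D2F (ray t) k u)).
  - apply (derivable_along_ray (fun w => DF w u) (fun w => D2F w k u)).
    intros w Hw. apply DF_deriv, Hw.
  - intros s Hs. rewrite ray_0. apply D2F_ray_cross_le; auto.
Qed.

(* The witness t makes the linear decrease DF(y)[u] + c t fall below -(M + 1),
   where M bounds theta D^2F[u,u] along the whole ray. *)
Lemma hessian_cone_nonneg u : K u -> 0 <= D2F y k u.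
Proof.
  intros Hu. destruct (Rle_or_lt 0 (D2F y k u)) as [|Hc]; [assumption|exfalso].
  set (c := D2F y k u) in *. set (g0 := DF y u).
  set (M := Rabs theta * D2F y u u).
  assert (HM : 0 <= M) by (apply Rmult_le_pos; [apply Rabs_pos | apply D2F_diag_nonneg; auto]).
  set (t := (Rabs g0 + M + 1) / (- c)).
  pose proof (Rabs_pos g0). pose proof (Rle_abs g0).
  assert (Ht : 0 < t) by (apply Rdiv_lt_0_compat; lra).
  assert (Ct : c * t = - (Rabs g0 + M + 1)) by (unfold t; field; lra).
  assert (Hslope := DF_ray_le u t Hu ltac:(lra)). fold c g0 in Hslope.
  assert (Hbar := barrier_parameter (ray t) u (ray_int t ltac:(lra))).
  assert (theta * D2F (ray t) u u <= M).
  { unfold M. pose proof (D2F_diag_nonneg (ray t) u (ray_int t ltac:(lra))).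
    apply Rle_trans with (Rabs theta * D2F (ray t) u u).
    - apply Rmult_le_compat_r; [assumption | apply RRle_abs].
    - apply Rmult_le_compat_l; [apply Rabs_pos | apply D2F_ray_diag_le; lra]. }
  nra.
Qed.

End Ray.

Lemma DF_monotone_along_cone x h u :
  int_set K x -> K h -> K u -> DF x u <= DF (vadd x h) u.
Proof.
  intros Hx Hh Hu.
  replace (vadd x h) with (vadd x (vscal 1 h)) by vec_ext.
  destruct (MVT_cor2 (fun t => DF (vadd x (vscal t h)) u)
              (fun t => D2F (vadd x (vscal t h)) h u) 0 1 ltac:(lra)) as [s [Es Hs]].
  { intros s Hs.
    apply (derivable_along_ray x h Hx Hh (fun w => DF w u) (fun w => D2F w h u)); [|lra].
    intros w Hw. apply DF_deriv, Hw. }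
  assert (0 <= D2F (vadd x (vscal s h)) h u)
    by (apply hessian_cone_nonneg; auto; apply int_set_ray; auto; lra).
  replace (vadd x (vscal 0 h)) with x in Es by vec_ext. nra.
Qed.

End NegativeCurvature.

Theorem mainTheorem16 (n : nat) (K : vec n -> Prop) (F : vec n -> R) (nu : R)
    (DF : vec n -> vec n -> R) (D2F : vec n -> vec n -> vec n -> R)
    (D3F : vec n -> vec n -> vec n -> vec n -> R) :
  regular_cone K ->
  normal_barrier K F nu DF D2F D3F ->
  negative_curvature K D3F ->
  forall x h : vec n, int_set K x -> K h ->
    in_dual_cone K (fun u => D2F x h u) /\
    in_dual_cone K (fun u => DF (vadd x h) u - DF x u).
Proof.
  intros [Kcone [_ [Kconvex _]]] [[HC3 [Fconvex [_ [_ [theta Htheta]]]]] _] Hneg x h Hx Hh.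
  destruct HC3 as [D1 [D2 [D3 [_ [_ [cD2 [cD3 Hlin]]]]]]].
  assert (Hopen := int_set_open K).
  assert (Hswap := third_derivative_swap _ F DF D2F D3F Hopen D1 D2 D3 cD2 cD3).
  assert (Hpsd := hessian_nonneg_of_convex _ F DF D2F Hopen D1 D2 Fconvex).
  assert (Hxh : int_set K (vadd x h)).
  { replace (vadd x h) with (vadd x (vscal 1 h)) by vec_ext.
    apply int_set_ray; auto; lra. }
  split; split.
  - apply (Hlin x Hx).
  - intros u Hu. apply (hessian_cone_nonneg K DF D2F D3F theta); auto.
  - apply linear_form_sub; [apply (Hlin _ Hxh) | apply (Hlin x Hx)].
  - intros u Hu.
    assert (DF x u <= DF (vadd x h) u)
      by (apply (DF_monotone_along_cone K DF D2F D3F theta); auto).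
    lra.
Qed.
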